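(* Fix $N\ge1$, $L>0$, $\alpha>0$. There is a lower triangular matrix $H\in\mathbb{R}^{2N\times 2N}$ such that for every $d\ge1$, every operator $\mathbb{A}\colon\mathbb{R}^d\to\mathbb{R}^d$ and every $x_0\in\mathbb{R}^d$: (i) the iterates $x_0,x_{1/2},x_1,\dots,x_N$ of the Fast Extragradient method \[ x_{k+1/2}=x_k+\tfrac{1}{k+1}(x_0-x_k)-\tfrac{k}{k+1}\alpha\mathbb{A}x_k,\qquad x_{k+1}=x_k+\tfrac{1}{k+1}(x_0-x_k)-\alpha\mathbb{A}x_{k+1/2}\quad(k=0,\dots,N-1) \] satisfy $x_{(\ell+1)/2}=x_{\ell/2}-\frac1L\sum_{i=0}^{\ell}H_{\ell+1,i+1}\,\mathbb{A}x_{i/2}$ for $\ell=0,1,\dots,2N-1$; and (ii) the iterates $x_0,x_{1/2},x_1,\dots,x_N$ of the Dual Fast Extragradient method \[ x_{k+1/2}=x_k-\alpha z_k-\alpha\mathbb{A}x_k,\quad x_{k+1}=x_{k+1/2}-\tfrac{N-k-1}{N-k}\alpha(\mathbb{A}x_{k+1/2}-\mathbb{A}x_k),\quad z_{k+1}=\tfrac{N-k-1}{N-k}z_k-\tfrac{1}{N-k}\mathbb{A}x_{k+1/2} \] ($k=0,\dots,N-1$, $z_0=0$) satisfy $x_{(\ell+1)/2}=x_{\ell/2}-\frac1L\sum_{i=0}^{\ell}(H^A)_{\ell+1,i+1}\,\mathbb{A}x_{i/2}$ for $\ell=0,\dots,2N-1$, where $(H^A)_{\ell,i}=H_{2N+1-i,\,2N+1-\ell}$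 is the anti-diagonal transpose. That is, the two methods are H-duals of each other.
   Context: Rows and columns of $2N\times2N$ matrices are indexed $1,\dots,2N$. The iterates are indexed by half-integers $\ell/2$, $\ell=0,\dots,2N$. *)

From HB Require Import structures.
From mathcomp Require Import all_boot all_order all_algebra.
From mathcomp Require Import reals.
Set Implicit Arguments. Unset Strict Implicit. Unset Printing Implicit Defensive.
Import Order.TTheory GRing.Theory Num.Theory.
Local Open Scope ring_scope.

Section Methods.
Variables (R : realType) (d : nat).

Definition feg_half (alpha : R) (A : 'cV[R]_d -> 'cV[R]_d) (x0 : 'cV[R]_d) (k : nat) (xk : 'cV[R]_d) : 'cV[R]_d :=
  xk + (k.+1%:R)^-1 *: (x0 - xk) - (k%:R / k.+1%:R * alpha) *: A xk.

Fixpoint feg_x (alpha : R) (A : 'cV[R]_d -> 'cV[R]_d) (x0 : 'cV[R]_d) (k : nat) : 'cV[R]_d :=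
  match k with
  | 0 => x0
  | k'.+1 => let xk := feg_x alpha A x0 k' in
             xk + (k'.+1%:R)^-1 *: (x0 - xk) - alpha *: A (feg_half alpha A x0 k' xk)
  end.

(* Half-integer indexed iterates: feg_iter l = x_{l/2}. *)
Definition feg_iter (alpha : R) (A : 'cV[R]_d -> 'cV[R]_d) (x0 : 'cV[R]_d) (l : nat) : 'cV[R]_d :=
  if odd l then feg_half alpha A x0 l./2 (feg_x alpha A x0 l./2)
  else feg_x alpha A x0 l./2.

Definition dfeg_half (alpha : R) (A : 'cV[R]_d -> 'cV[R]_d) (xz : 'cV[R]_d * 'cV[R]_d) : 'cV[R]_d :=
  xz.1 - alpha *: xz.2 - alpha *: A xz.1.

Fixpoint dfeg_xz (N : nat) (alpha : R) (A : 'cV[R]_d -> 'cV[R]_d) (x0 : 'cV[R]_d) (k : nat) : 'cV[R]_d * 'cV[R]_d :=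
  match k with
  | 0 => (x0, 0)
  | k'.+1 =>
      let xz := dfeg_xz N alpha A x0 k' in
      let xh := dfeg_half alpha A xz in
      let c := (N - k' - 1)%N%:R / (N - k')%N%:R in
      (xh - (c * alpha) *: (A xh - A xz.1),
       c *: xz.2 - ((N - k')%N%:R)^-1 *: A xh)
  end.

Definition dfeg_iter N (alpha : R) (A : 'cV[R]_d -> 'cV[R]_d) (x0 : 'cV[R]_d) (l : nat) : 'cV[R]_d :=
  if odd l then dfeg_half alpha A (dfeg_xz N alpha A x0 l./2)
  else (dfeg_xz N alpha A x0 l./2).1.
End Methods.

Definition lower_triangular (R : realType) (n : nat) (H : 'M[R]_n) : Prop :=
  forall i j : 'I_n, (i < j)%N -> H i j = 0.

(* Anti-diagonal transpose: (H^A)_{l,i} = H_{n+1-i, n+1-l} (1-based),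
   i.e. H^A l i = H (rev_ord i) (rev_ord l) (0-based). *)
Definition anti_transpose (R : realType) (n : nat) (H : 'M[R]_n) : 'M[R]_n :=
  \matrix_(l, i) H (rev_ord i) (rev_ord l).

Definition H_generates (R : realType) (n d : nat) (H : 'M[R]_n) (L : R)
  (A : 'cV[R]_d -> 'cV[R]_d) (y : nat -> 'cV[R]_d) : Prop :=
  forall l : 'I_n,
    y l.+1 = y l - L^-1 *: \sum_(i < n | (i <= l)%N) H l i *: A (y i).

From HB Require Import structures.
From mathcomp Require Import all_boot all_order all_algebra.
From mathcomp Require Import reals.
From mathcomp Require Import zify ring.
Set Implicit Arguments.
Unset Strict Implicit.
Unset Printing Implicit Defensive.
Import Order.TTheory GRing.Theory Num.Theory.
Local Open Scope ring_scope.

(** Both step-size matrices have the sparsity pattern of [ladder_mx].  For the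
    Fast Extragradient method this rests on the anchor identity
    [k (x0 - x_k) = alpha * sum_(j<k) (j+1) A x_(j+1/2)], which turns the anchor
    term of each step into a combination of past half-step operator values; for
    the dual method the dual variable [z_k] is such a combination as well.
    Anti-transposition maps ladder matrices to ladder matrices, reflecting the
    block index [k -> N-1-k] and exchanging the two diagonal sequences; applied
    to the matrix of the first method it produces exactly the coefficients of
    the second. *)

Lemma double_half_ind (P : nat -> Prop) :
  (forall k, P k.*2) -> (forall k, P k.*2.+1) -> forall n, P n.
Proof.
by move=> Peven Podd n; rewrite -[n]odd_double_half; case: (odd n); [apply: Podd | apply: Peven].
Qed.

Lemma big_ord_le (V : nmodType) n l (F : nat -> V) : (l < n)%N ->
  \sum_(i < n | (i <= l)%N) F i = \sum_(i < l.+1) F i.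
Proof. by move=> lt_ln; rewrite (big_ord_widen _ F lt_ln); apply: eq_bigl => i; rewrite ltnS. Qed.

Lemma big_ord_double (V : nmodType) k (F : nat -> V) :
  \sum_(i < k.*2) F i = \sum_(j < k) (F j.*2 + F j.*2.+1).
Proof.
elim: k => [|k IHk]; first by rewrite !big_ord0.
by rewrite doubleS !big_ord_recr /= IHk addrA.
Qed.

Section Ladder.
Variables (R : realType) (p : nat -> R) (w : nat -> nat -> R) (r q : nat -> R).

Definition ladder_coef (l i : nat) : R :=
  if odd l then (if i == l then q l./2 else if i == l.-1 then r l./2 else 0)
  else if i == l then p l./2 else if odd i && (i < l)%N then w l./2 i./2 else 0.

Definition ladder_mx n : 'M[R]_n := \matrix_(l, i) ladder_coef l i.

Lemma ladder_coef_even k i : ladder_coef k.*2 i =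
  if i == k.*2 then p k else if odd i && (i < k.*2)%N then w k i./2 else 0.
Proof. by rewrite /ladder_coef odd_double half_double. Qed.

Lemma ladder_coef_odd k i : ladder_coef k.*2.+1 i =
  if i == k.*2.+1 then q k else if i == k.*2 then r k else 0.
Proof. by rewrite /ladder_coef /= odd_double uphalf_double. Qed.

Lemma ladder_mx_lower_triangular n : lower_triangular (ladder_mx n).
Proof.
move=> l i lt_li; rewrite mxE; elim/double_half_ind: (nat_of_ord l) lt_li => k lt_ki.
  by rewrite ladder_coef_even !ifF //; lia.
by rewrite ladder_coef_odd !ifF //; lia.
Qed.

Lemma ladder_rowsum_even (V : lmodType R) (v : nat -> V) k :
  \sum_(i < k.*2.+1) ladder_coef k.*2 i *: v i =
  p k *: v k.*2 + \sum_(j < k) w k j *: v j.*2.+1.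
Proof.
rewrite big_ord_recr /= (big_ord_double k (fun i => ladder_coef k.*2 i *: v i)).
rewrite ladder_coef_even eqxx addrC; congr (_ + _).
apply: eq_bigr => j _; have lt_jk := ltn_ord j.
have [ne_even ne_odd lt_odd] : [/\ (j.*2 == k.*2) = false, (j.*2.+1 == k.*2) = false
  & (j.*2.+1 < k.*2)%N] by split; lia.
by rewrite !ladder_coef_even /= odd_double uphalf_double ne_even ne_odd lt_odd scale0r add0r.
Qed.

Lemma ladder_rowsum_odd (V : lmodType R) (v : nat -> V) k :
  \sum_(i < k.*2.+2) ladder_coef k.*2.+1 i *: v i = r k *: v k.*2 + q k *: v k.*2.+1.
Proof.
rewrite !big_ord_recr /= big1 => [|i _]; last first.
  by have lt_i := ltn_ord i; rewrite ladder_coef_odd !ifF ?scale0r //; lia.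
have ne : (k.*2 == k.*2.+1) = false by lia.
by rewrite add0r !ladder_coef_odd ne !eqxx.
Qed.

Lemma ladder_generates L d (A : 'cV[R]_d -> 'cV[R]_d) (y : nat -> 'cV[R]_d) n :
  (forall k, (k.*2 < n)%N ->
     y k.*2.+1 = y k.*2 - L^-1 *: (p k *: A (y k.*2) + \sum_(j < k) w k j *: A (y j.*2.+1))) ->
  (forall k, (k.*2.+1 < n)%N ->
     y k.*2.+2 = y k.*2.+1 - L^-1 *: (r k *: A (y k.*2) + q k *: A (y k.*2.+1))) ->
  H_generates (ladder_mx n) L A y.
Proof.
move=> even_step odd_step l; under eq_bigr do rewrite mxE.
rewrite (big_ord_le (fun i => ladder_coef l i *: A (y i))) //.
elim/double_half_ind: (nat_of_ord l) (ltn_ord l) => k lt_kn.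
  by rewrite (ladder_rowsum_even (fun i => A (y i))) -even_step.
by rewrite (ladder_rowsum_odd (fun i => A (y i))) -odd_step.
Qed.

End Ladder.

Lemma rev_double N k : (k.*2 < 2 * N)%N -> (2 * N - k.*2.+1 = (N - k.+1).*2.+1)%N.
Proof. lia. Qed.

Lemma rev_double_succ N k : (k.*2.+1 < 2 * N)%N -> (2 * N - k.*2.+2 = (N - k.+1).*2)%N.
Proof. lia. Qed.

Lemma anti_transpose_ladder (R : realType) N (p : nat -> R) w r q :
  anti_transpose (ladder_mx p w r q (2 * N)) =
  ladder_mx (fun k => q (N - k.+1)%N) (fun k m => w (N - m.+1)%N (N - k.+1)%N)
            (fun k => r (N - k.+1)%N) (fun k => p (N - k.+1)%N) (2 * N).
Proof.
apply/matrixP => l i; rewrite !mxE /=.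
elim/double_half_ind: (nat_of_ord l) (ltn_ord l) => k lt_k;
  elim/double_half_ind: (nat_of_ord i) (ltn_ord i) => j lt_j.
- rewrite !rev_double // !ladder_coef_odd ladder_coef_even /= odd_double /=.
  by have [<-|ne] := eqVneq j k; rewrite ?eqxx //= !ifF //; lia.
- rewrite rev_double_succ // rev_double // !ladder_coef_even /= odd_double /=.
  have [ne_diag ne_col] : ((N - k.+1).*2.+1 == (N - j.+1).*2) = false
    /\ (j.*2.+1 == k.*2) = false by split; lia.
  have lt_rev : ((N - k.+1).*2.+1 < (N - j.+1).*2)%N = (j.*2.+1 < k.*2)%N by lia.
  by rewrite odd_double !uphalf_double ne_diag ne_col lt_rev.
- rewrite rev_double // rev_double_succ // !ladder_coef_odd.
  by have [<-|ne] := eqVneq j k; rewrite ?eqxx //= !ifF //; lia.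
- rewrite !rev_double_succ // ladder_coef_even ladder_coef_odd /= odd_double /=.
  by have [<-|ne] := eqVneq j k; rewrite ?eqxx //= !ifF //; lia.
Qed.

Definition feg_mx (R : realType) N (alpha L : R) : 'M[R]_(2 * N) :=
  ladder_mx (fun k => alpha * L * (k%:R / k.+1%:R))
            (fun k j => - (alpha * L * (j.+1%:R / (k%:R * k.+1%:R))))
            (fun k => - (alpha * L * (k%:R / k.+1%:R)))
            (fun=> alpha * L) (2 * N).

Section FastExtragradient.
Variables (R : realType) (d : nat) (alpha L : R) (A : 'cV[R]_d -> 'cV[R]_d) (x0 : 'cV[R]_d).
Hypothesis L_neq0 : L != 0.
Local Notation x := (feg_x alpha A x0).
Local Notation y := (feg_iter alpha A x0).

Lemma feg_iter_double k : y k.*2 = x k.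
Proof. by rewrite /feg_iter odd_double half_double. Qed.

Lemma feg_iter_double_succ k : y k.*2.+1 = feg_half alpha A x0 k (x k).
Proof. by rewrite /feg_iter /= odd_double uphalf_double. Qed.

Lemma feg_x_anchor k :
  k%:R *: (x0 - x k) = alpha *: \sum_(j < k) j.+1%:R *: A (y j.*2.+1).
Proof.
elim: k => [|k IHk]; first by rewrite big_ord0 scale0r scaler0.
rewrite big_ord_recr /= [in RHS]scalerDr -IHk feg_iter_double_succ.
apply/matrixP => a b; rewrite !mxE -natr1.
by field; rewrite natr1 pnatr_eq0.
Qed.

Lemma feg_even_step k :
  y k.*2.+1 = y k.*2 - L^-1 *: (alpha * L * (k%:R / k.+1%:R) *: A (y k.*2)
    + \sum_(j < k) (- (alpha * L * (j.+1%:R / (k%:R * k.+1%:R)))) *: A (y j.*2.+1)).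
Proof.
rewrite feg_iter_double feg_iter_double_succ /feg_half.
have [->|k_neq0] := eqVneq k 0%N.
  by rewrite big_ord0 /=; apply/matrixP => a b; rewrite !mxE; field.
have -> : \sum_(j < k) (- (alpha * L * (j.+1%:R / (k%:R * k.+1%:R)))) *: A (y j.*2.+1)
    = (- (L / (k%:R * k.+1%:R))) *: (alpha *: \sum_(j < k) j.+1%:R *: A (y j.*2.+1)).
  rewrite scalerA scaler_sumr; apply: eq_bigr => j _; rewrite scalerA; congr (_ *: _); ring.
rewrite -feg_x_anchor; apply/matrixP => a b; rewrite !mxE -natr1.
by field; rewrite natr1 !pnatr_eq0 k_neq0.
Qed.

Lemma feg_odd_step k :
  y k.*2.+2 = y k.*2.+1 - L^-1 *: (- (alpha * L * (k%:R / k.+1%:R)) *: A (y k.*2)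
    + alpha * L *: A (y k.*2.+1)).
Proof.
rewrite -doubleS feg_iter_double feg_iter_double_succ feg_iter_double /= /feg_half.
apply/matrixP => a b; rewrite !mxE -natr1.
by field; rewrite natr1 pnatr_eq0.
Qed.

Lemma feg_generates N : H_generates (feg_mx N alpha L) L A y.
Proof. by apply: ladder_generates => k _; [apply: feg_even_step | apply: feg_odd_step]. Qed.

End FastExtragradient.

Section DualFastExtragradient.
Variables (R : realType) (d N : nat) (alpha L : R) (A : 'cV[R]_d -> 'cV[R]_d) (x0 : 'cV[R]_d).
Hypothesis L_neq0 : L != 0.
Local Notation xz := (dfeg_xz N alpha A x0).
Local Notation y := (dfeg_iter N alpha A x0).

Lemma dfeg_iter_double k : y k.*2 = (xz k).1.
Proof. by rewrite /dfeg_iter odd_double half_double. Qed.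

Lemma dfeg_iter_double_succ k : y k.*2.+1 = dfeg_half alpha A (xz k).
Proof. by rewrite /dfeg_iter /= odd_double uphalf_double. Qed.

Lemma dfeg_ratioE k : (k < N)%N ->
  (N - k - 1)%N%:R / (N - k)%N%:R = (N - k.+1)%N%:R / (N - k.+1).+1%:R :> R.
Proof. by move=> lt_kN; congr (_%:R / _%:R); lia. Qed.

Lemma dfeg_z_sum k : (k < N)%N ->
  (xz k).2 = - \sum_(m < k)
    ((N - k.+1).+1%:R / ((N - m.+1)%N%:R * (N - m.+1).+1%:R)) *: A (y m.*2.+1).
Proof.
elim: k => [|k IHk] lt_kN; first by rewrite big_ord0 oppr0.
rewrite /= big_ord_recr /= IHk ?dfeg_ratioE; try lia.
have -> : (N - k.+2).+1 = (N - k.+1)%N by lia.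
have -> : (N - k)%N = (N - k.+1).+1 by lia.
rewrite scalerN scaler_sumr opprD dfeg_iter_double_succ; congr (- _ - _).
  by apply: eq_bigr => m _; rewrite scalerA mulrA mulfVK ?pnatr_eq0.
by congr (_ *: _); field; rewrite nat1r !pnatr_eq0 /=; lia.
Qed.

Lemma dfeg_even_step k : (k < N)%N ->
  y k.*2.+1 = y k.*2 - L^-1 *: (alpha * L *: A (y k.*2) + \sum_(m < k)
    (- (alpha * L * ((N - k.+1).+1%:R / ((N - m.+1)%N%:R * (N - m.+1).+1%:R)))) *: A (y m.*2.+1)).
Proof.
move=> lt_kN; rewrite dfeg_iter_double_succ dfeg_iter_double /dfeg_half dfeg_z_sum //.
set a := fun m : nat => (N - k.+1).+1%:R / ((N - m.+1)%N%:R * (N - m.+1).+1%:R) : R.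
have -> : \sum_(m < k) (- (alpha * L * a m)) *: A (y m.*2.+1)
    = - (alpha * L) *: \sum_(m < k) a m *: A (y m.*2.+1).
  by rewrite scaler_sumr; apply: eq_bigr => m _; rewrite scalerA mulNr.
set S := \sum_(m < k) _.
by apply/matrixP => i j; rewrite !mxE; field.
Qed.

Lemma dfeg_odd_step k : (k < N)%N ->
  y k.*2.+2 = y k.*2.+1 - L^-1 *:
    (- (alpha * L * ((N - k.+1)%N%:R / (N - k.+1).+1%:R)) *: A (y k.*2)
     + alpha * L * ((N - k.+1)%N%:R / (N - k.+1).+1%:R) *: A (y k.*2.+1)).
Proof.
move=> lt_kN; rewrite -doubleS !dfeg_iter_double dfeg_iter_double_succ /= dfeg_ratioE //.
by apply/matrixP => a b; rewrite !mxE; field; rewrite nat1r pnatr_eq0 L_neq0.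
Qed.

Lemma dfeg_generates : H_generates (anti_transpose (feg_mx N alpha L)) L A y.
Proof.
rewrite anti_transpose_ladder.
apply: ladder_generates => k lt_k; [apply: dfeg_even_step | apply: dfeg_odd_step]; lia.
Qed.

End DualFastExtragradient.

Theorem proposition6p2 (R : realType) (N : nat) (L alpha : R) :
  (1 <= N)%N -> 0 < L -> 0 < alpha ->
  exists H : 'M[R]_(2 * N),
    lower_triangular H /\
    forall (d : nat) (A : 'cV[R]_d -> 'cV[R]_d) (x0 : 'cV[R]_d),
      (1 <= d)%N ->
      H_generates H L A (feg_iter alpha A x0) /\
      H_generates (anti_transpose H) L A (dfeg_iter N alpha A x0).
Proof.
move=> _ L_gt0 _; have L_neq0 : L != 0 by rewrite gt_eqF.
exists (feg_mx N alpha L); split; first exact: ladder_mx_lower_triangular.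
by move=> d A x0 _; split; [apply: feg_generates | apply: dfeg_generates].
Qed.
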